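(* Let $K$ be an algebraically closed field of characteristic $\ne 2$, $n\ge2$ even, $G=\mathrm{PGL}_n(K)$, and let $D$ be a nontrivial toral elementary abelian $2$-subgroup of $G$ with $C_G(D)=C_G(D)^\circ$. Then $D$ contains an involution not $G$-conjugate to $e_{n/2}$, the image in $G$ of $\mathrm{diag}(-I_{n/2},I_{n/2})$.
   Context: Toral: contained in a maximal torus of $G$. $C_G(D)^\circ$ denotes the identity component of the centralizer. *)

(* PGL_n(K) modelled via representatives in GL_n(K). *)
From HB Require Import structures.
From mathcomp Require Import all_boot all_order all_algebra.
From mathcomp Require Import mpoly.
Set Implicit Arguments. Unset Strict Implicit. Unset Printing Implicit Defensive.
Import Order.TTheory GRing.Theory.
Local Open Scope ring_scope.

Section PGL.
Variables (K : fieldType) (n : nat).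

Definition proj_eq (A B : 'M[K]_n) : Prop :=
  exists2 c : K, c != 0 & A = c *: B.

(* Zariski-closed subsets of GL_n(K) (subspace topology from affine n^2-space,
   which is the variety topology of the principal open GL_n = D(det)). *)
Definition zariski_closed_GL (F : 'M[K]_n -> Prop) : Prop :=
  exists P : {mpoly K[n * n]} -> Prop,
    forall A : 'M[K]_n, A \in unitmx ->
      (F A <-> forall p, P p -> p.@[fun i => mxvec A 0 i] = 0).

Definition zariski_connected_GL (C : 'M[K]_n -> Prop) : Prop :=
  ~ exists F1 F2 : 'M[K]_n -> Prop,
      [/\ zariski_closed_GL F1 /\ zariski_closed_GL F2,
          (forall A, C A -> F1 A \/ F2 A),
          (exists A, C A /\ F1 A), (exists A, C A /\ F2 A)
        & (forall A, C A -> F1 A -> F2 A -> False)].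

(* D is (the full preimage in GL_n(K) of) a subgroup of PGL_n(K). *)
Definition pgl_subgroup (D : 'M[K]_n -> Prop) : Prop :=
  [/\ forall A, D A -> A \in unitmx,
      D 1%:M,
      (forall A B, D A -> proj_eq B A -> D B),
      (forall A B, D A -> D B -> D (A *m B))
    & (forall A, D A -> D (invmx A))].

Definition pgl_elem_abelian2 (D : 'M[K]_n -> Prop) : Prop :=
  [/\ (exists s : seq 'M[K]_n, forall A, D A -> exists2 B, B \in s & proj_eq A B),
      (forall A B, D A -> D B -> proj_eq (A *m B) (B *m A))
    & (forall A, D A -> proj_eq (A *m A) 1%:M)].

Definition pgl_nontrivial (D : 'M[K]_n -> Prop) : Prop :=
  exists2 A, D A & ~ proj_eq A 1%:M.

(* Toral: contained in a maximal torus of PGL_n(K), i.e. in a conjugate of the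
   image of the diagonal torus. *)
Definition pgl_toral (D : 'M[K]_n -> Prop) : Prop :=
  exists2 g : 'M[K]_n, g \in unitmx &
    forall A, D A -> exists d : 'rV[K]_n, proj_eq A (g *m diag_mx d *m invmx g).

(* Preimage in GL_n(K) of the centralizer C_G(D), G = PGL_n(K). *)
Definition pgl_centralizer (D : 'M[K]_n -> Prop) (g : 'M[K]_n) : Prop :=
  g \in unitmx /\ forall A, D A -> proj_eq (g *m A *m invmx g) A.

Definition pgl_conj (A B : 'M[K]_n) : Prop :=
  exists2 g : 'M[K]_n, g \in unitmx & proj_eq (g *m A *m invmx g) B.

Definition e_half : 'M[K]_n :=
  diag_mx (\row_(i < n) (if (i < n./2)%N then -1 else 1)).

End PGL.

From HB Require Import structures.
From mathcomp Require Import all_boot all_order all_algebra.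
From mathcomp Require Import fingroup perm.
From mathcomp Require Import mpoly.
From mathcomp Require Import boolp.
From mathcomp Require Import zify.
Set Implicit Arguments. Unset Strict Implicit. Unset Printing Implicit Defensive.
Import Order.TTheory GRing.Theory.
Local Open Scope ring_scope.

(* Suppose every nontrivial element of D were conjugate to e_{n/2}.  Conjugating
   D into the diagonal torus, each of its elements is, up to a scalar, a sign
   matrix diag((-1)^w_i), and the words w form a binary linear code V in which
   every nonzero word has weight n/2: a conjugate of e_{n/2} has as many
   eigenvalues -1 as +1, which is read off the rank of S - 1.  For such a code
   a character-sum argument shows that for every coordinate j the coordinates
   of each "column type" t and of type t + (column j) are equally numerous, so
   some permutation s of coordinates satisfies w (s i) = w i + w j on V.  The
   permutation matrix of s, conjugated back, centralizes D in PGL_n and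
   anticommutes with an element A of D whose word has w j = 1.  Hence C_G(D)
   is covered by the disjoint closed sets {X | XA = AX} and {X | XA = -AX},
   both of which it meets, so it is not connected. *)

Lemma sum_bool_card (I : finType) (b : I -> bool) : (\sum_i b i)%N = #|[set i | b i]|.
Proof. by rewrite -sum1_card [RHS]big_mkcond; apply: eq_bigr => i _; rewrite inE; case: (b i). Qed.

Lemma perm_of_fibers (I : finType) (T : eqType) (f : I -> T) (g : T -> T) :
    injective g ->
    (forall i, #|[set k | f k == f i]| = #|[set k | f k == g (f i)]|) ->
  exists s : {perm I}, forall i, f (s i) = g (f i).
Proof.
move=> g_inj cardFG.
pose F i := enum [set k | f k == f i]; pose G i := enum [set k | f k == g (f i)].
have idx_lt i : (index i (F i) < size (G i))%N.
  by rewrite -cardE -cardFG cardE index_mem mem_enum inE.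
(* [s] sends the k-th element of the fiber of [f i] to the k-th element of the
   fiber of [g (f i)]. *)
pose s i := nth i (G i) (index i (F i)).
have sG i : f (s i) = g (f i).
  by apply/eqP; have := mem_nth i (idx_lt i); rewrite mem_enum inE.
have s_inj : injective s.
  move=> i i' si_eq; have fi_eq : f i = f i' by apply: g_inj; rewrite -!sG si_eq.
  have [FE GE] : F i = F i' /\ G i = G i' by rewrite /F /G fi_eq.
  have iF : i \in F i' by rewrite -FE mem_enum inE.
  have i'F : i' \in F i' by rewrite mem_enum inE.
  move: si_eq (idx_lt i) (idx_lt i'); rewrite /s FE GE => + lt_i lt_i'.
  rewrite (set_nth_default i' i lt_i) => /eqP; rewrite nth_uniq ?enum_uniq // => /eqP.
  by move/(congr1 (nth i (F i'))); rewrite !nth_index.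
by exists (perm s_inj) => i; rewrite permE.
Qed.

Section BinaryWords.
Variable n : nat.
Local Notation word := {ffun 'I_n -> bool}.

Definition xorw (u v : word) : word := [ffun i => u i (+) v i].
Definition zerow : word := [ffun=> false].
Definition weight (w : word) : nat := #|[set i | w i]|.

Lemma xorwK u : involutive (xorw u).
Proof. by move=> v; apply/ffunP => i; rewrite !ffunE addKb. Qed.

Lemma xorw0 : xorw zerow zerow = zerow.
Proof. by apply/ffunP => i; rewrite !ffunE. Qed.

Lemma weight0 : weight zerow = 0%N.
Proof. by apply: eq_card0 => i; rewrite inE ffunE. Qed.

Lemma sum_signr_weight (w : word) : \sum_i (-1) ^+ w i = n%:Z - ((weight w).*2)%:Z.
Proof.
rewrite (eq_bigr (fun i => 1 - (w i)%:R *+ 2)) => [|i _]; last by case: (w i).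
by rewrite /weight sumrB sumr_const card_ord sumrMnl -natr_sum sum_bool_card -mul2n natz; lia.
Qed.

Variable V : {set word}.
Hypotheses (V0 : zerow \in V) (V_xor : {in V &, forall u v, xorw u v \in V}).

Definition additive_on (phi : word -> bool) :=
  {in V &, forall u v, phi (xorw u v) = phi u (+) phi v}.

Lemma sum_signr_character (phi : word -> bool) u :
  additive_on phi -> u \in V -> phi u -> \sum_(v in V) (-1) ^+ phi v = 0 :> int.
Proof.
move=> phiD uV phiu.
have Vu v : (xorw u v \in V) = (v \in V).
  apply/idP/idP => [|vV]; last exact: V_xor.
  by rewrite -{2}(xorwK u v); apply: V_xor.
have SN : \sum_(v in V) (-1) ^+ phi v = - \sum_(v in V) (-1) ^+ phi v :> int.
  rewrite {1}(reindex_inj (can_inj (xorwK u))) /= -sumrN.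
  apply: eq_big => [v|v]; rewrite Vu // => vV.
  by rewrite phiD // phiu signr_addb mulN1r.
lia.
Qed.

Hypothesis weightV : forall w, w \in V -> w != zerow -> (weight w).*2 = n.

(* Double counting of [\sum_(v in V) \sum_i (-1) ^+ (v i (+) tau v)]: summing over
   [i] first, only [v = 0] contributes since other words have weight [n / 2];
   summing over [v] first, only the fiber contributes, by orthogonality of
   characters. *)
Lemma card_mul_fiber (tau : word -> bool) : additive_on tau ->
  (#|V| * #|[set i | [forall v in V, v i == tau v]]|)%N = n.
Proof.
move=> tauD; have tau0 : tau zerow = false by have := tauD _ _ V0 V0; rewrite xorw0 addbb.
pose S := \sum_(v in V) \sum_i (-1) ^+ (v i (+) tau v) : int.
have S_fiber : S = (#|V| * #|[set i | [forall v in V, v i == tau v]]|)%N.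
  rewrite /S exchange_big (bigID (fun i => [forall v in V, v i == tau v])) /=.
  rewrite [X in _ + X]big1 => [|i /forall_inPn [u uV neq]]; last first.
    apply: (sum_signr_character (u := u)) => //.
      move=> x y xV yV; rewrite ffunE tauD //.
      by case: (x i); case: (y i); case: (tau x); case: (tau y).
    by move: neq; case: (u i); case: (tau u).
  rewrite addr0 (eq_bigr (fun _ => #|V|%:R)) => [|i /forall_inP fib]; last first.
    rewrite -sumr_const; apply: eq_bigr => v vV.
    by rewrite (eqP (fib v vV)) addbb.
  rewrite sumr_const -natz natrM mulr_natr; congr (_ *+ _).
  by apply: eq_card => i; rewrite inE.
have S_n : S = n.
  rewrite /S (bigD1 zerow) //= [X in _ + X]big1 ?addr0; last first.
    move=> v /andP [vV v0].
    rewrite (eq_bigr (fun i => (-1) ^+ tau v * (-1) ^+ v i)) => [|i _]; last first.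
      by rewrite signr_addb mulrC.
    by rewrite -mulr_sumr sum_signr_weight weightV // subrr mulr0.
  rewrite tau0 (eq_bigr (fun i => (-1) ^+ zerow i)) => [|i _]; last by rewrite addbF.
  by rewrite sum_signr_weight weight0 subr0.
by apply/eqP; rewrite -eqz_nat -S_fiber S_n.
Qed.

Lemma translation_perm j :
  exists s : 'S_n, forall v i, v \in V -> v (s i) = v i (+) v j.
Proof.
(* [f i] is the i-th column of the code, i.e. the character [v |-> v i] of [V]. *)
pose f i : {ffun word -> bool} := [ffun v => (v \in V) && v i].
pose g (t : {ffun word -> bool}) := [ffun v => t v (+) f j v].
have g_inj : injective g.
  by apply: (@can_inj _ _ _ g) => t; apply/ffunP => v; rewrite !ffunE addbK.
have fE k (tau : word -> bool) :
    (f k == [ffun v => (v \in V) && tau v]) = [forall v in V, v k == tau v].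
  apply/eqP/forall_inP => [/ffunP fk v vV | fk]; last first.
    by apply/ffunP => v; rewrite !ffunE; case vV: (v \in V); rewrite //= (eqP (fk v vV)).
  by move: (fk v); rewrite !ffunE vV /= => ->.
have gfE i : g (f i) = [ffun v => (v \in V) && (v i (+) v j)].
  by apply/ffunP => v; rewrite !ffunE; case: (v \in V).
have [s fs] : exists s : 'S_n, forall i, f (s i) = g (f i).
  apply: perm_of_fibers => // i; apply/eqP.
  have V_gt0 : (0 < #|V|)%N by apply/card_gt0P; exists zerow.
  rewrite -(eqn_pmul2l V_gt0) gfE.
  have fiberE tau : [set k | f k == [ffun v => (v \in V) && tau v]]
                    = [set k | [forall v in V, v k == tau v]].
    by apply/setP => k; rewrite !inE fE.
  rewrite (fiberE (fun v => v i)) fiberE !card_mul_fiber // => u v uV vV; rewrite !ffunE //.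
  by case: (u i); case: (v i); case: (u j); case: (v j).
exists s => v i vV; have /ffunP/(_ v) := fs i.
by rewrite gfE !ffunE vV.
Qed.
End BinaryWords.

Arguments zerow {n}.

Section MatrixRank.
Variable K : fieldType.

Lemma mxrank_diag n (d : 'rV[K]_n) : \rank (diag_mx d) = #|[set i | d 0 i != 0]|.
Proof.
rewrite -sum_bool_card; elim: n d => [|n IH] d; first by rewrite flatmx0 mxrank0 big_ord0.
change (\rank (diag_mx (d : 'rV_(1 + n))) = (\sum_(i < 1 + n) (d 0%R i != 0%R))%N).
rewrite -[X in diag_mx X](@hsubmxK _ 1 1 n) diag_mx_row rank_diag_block_mx IH rank_rV.
rewrite big_split_ord /=.
congr (_ + _)%N; last by apply: eq_bigr => i _; rewrite mxE.
rewrite big_ord1; congr (nat_of_bool (~~ _)).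
apply/eqP/eqP => [/matrixP/(_ 0 0)|d0]; first by rewrite !mxE mulr1n.
by apply/matrixP => i j; rewrite !ord1 !mxE mulr1n d0.
Qed.

Lemma mxrank_conj n (X A : 'M[K]_n) : X \in unitmx -> \rank (X *m A *m invmx X) = \rank A.
Proof.
move=> X_unit; rewrite mxrankMfree ?row_free_unit ?unitmx_inv //.
by rewrite eqmxMfull ?row_full_unit.
Qed.

End MatrixRank.

Lemma scalar_mx_inj (K : fieldType) n (a b : K) : (0 < n)%N -> a%:M = b%:M :> 'M_n -> a = b.
Proof. by move=> n_gt0 /matrixP/(_ (Ordinal n_gt0) (Ordinal n_gt0)); rewrite !mxE eqxx. Qed.

Lemma conj_scale_sign (K : fieldType) n (X A B : 'M[K]_n) (c e : K) :
    (0 < n)%N -> X \in unitmx -> e != 0 -> A *m A = e%:M -> B *m B = e%:M ->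
  X *m A *m invmx X = c *: B -> c = 1 \/ c = -1.
Proof.
move=> n_gt0 X_unit e_nz AA BB XA.
have : (X *m A *m invmx X) *m (X *m A *m invmx X) = e%:M.
  rewrite !mulmxA (mulmxKV X_unit) -(mulmxA X A A) AA mul_mx_scalar -scalemxAl.
  by rewrite (mulmxV X_unit) scalemx1.
rewrite XA -scalemxAl -scalemxAr scalerA BB scale_scalar_mx => /(scalar_mx_inj n_gt0).
move/eqP; rewrite -subr_eq0 -{2}[e]mul1r -mulrBl mulf_eq0 (negbTE e_nz) orbF subr_eq0.
by rewrite -expr2 sqrf_eq1 => /orP[] /eqP; [left|right].
Qed.

Section SignMatrices.
Variables (K : fieldType) (n : nat).
Local Notation word := {ffun 'I_n -> bool}.

Definition sgn_mx (w : word) : 'M[K]_n := diag_mx (\row_i (-1) ^+ w i).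

Lemma sgn_mxD u v : sgn_mx u *m sgn_mx v = sgn_mx (xorw u v).
Proof. by apply/matrixP => i j; rewrite mul_diag_mx !mxE ffunE signr_addb mulrnAr. Qed.

Lemma sgn_mx0 : sgn_mx zerow = 1%:M.
Proof. by apply/matrixP => i j; rewrite !mxE ffunE. Qed.

Lemma sgn_mxK w : sgn_mx w *m sgn_mx w = 1%:M.
Proof. by rewrite sgn_mxD -sgn_mx0; congr sgn_mx; apply/ffunP => i; rewrite !ffunE addbb. Qed.

Lemma perm_mx_sgn_mx (s : 'S_n) (w : word) b : (forall i, w (s i) = w i (+) b) ->
  perm_mx s *m sgn_mx w = (-1) ^+ b *: (sgn_mx w *m perm_mx s).
Proof.
move=> ws; apply/matrixP => i j; rewrite mul_mx_diag mul_diag_mx !mxE.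
have [<-|_] := eqVneq (s i) j; last by rewrite !mulr0n mul0r !mulr0.
by rewrite ws signr_addb mulr1 mul1r mulrC.
Qed.

Hypothesis two_nz : (2%:R : K) != 0.

Lemma signr_inj : injective (fun b : bool => (-1) ^+ b : K).
Proof.
have m1_neq1 : (-1 : K) != 1 by rewrite eq_sym -addr_eq0.
by case=> -[] //= /eqP; rewrite ?expr0 ?expr1 ?(negbTE m1_neq1) // eq_sym (negbTE m1_neq1).
Qed.

Lemma sgn_mx_scalar (w : word) c i k : sgn_mx w = c%:M -> w i = w k.
Proof.
move=> /matrixP wc; apply: signr_inj.
by have := wc i i; have := wc k k; rewrite !mxE !eqxx !mulr1n => -> ->.
Qed.

Lemma e_half_sgn : e_half K n = sgn_mx [ffun i : 'I_n => (i < n./2)%N].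
Proof. by apply/matrixP => i j; rewrite !mxE ffunE; case: (_ < _)%N. Qed.

Lemma weight_lt m : (m <= n)%N -> weight [ffun i : 'I_n => (i < m)%N] = m.
Proof.
move=> m_le_n; rewrite /weight -sum1_card (eq_bigl (fun i : 'I_n => (i < m)%N)) => [|i].
  by rewrite -(big_ord_widen _ (fun=> 1%N)) // sum1_card card_ord.
by rewrite !inE ffunE.
Qed.

Lemma weight_xorb (w : word) (b : bool) :
  weight [ffun i => w i (+) b] = if b then (n - weight w)%N else weight w.
Proof.
rewrite /weight; have := cardsC [set i | w i]; rewrite card_ord.
have -> : #|[set i | [ffun i => w i (+) b] i]| = #|if b then ~: [set i | w i] else [set i | w i]|.
  by case: b; apply: eq_card => i; rewrite !inE ffunE ?addbT ?addbF.
by case: b; lia.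
Qed.

Lemma scale_signr_sgn_mx (b : bool) (w : word) :
  (-1) ^+ b *: sgn_mx w = sgn_mx [ffun i => w i (+) b].
Proof.
by apply/matrixP => i j; rewrite !mxE ffunE signr_addb mulrnAr mulrC.
Qed.

Lemma mxrank_sgn_mx_sub1 (w : word) : \rank (sgn_mx w - 1%:M) = weight w.
Proof.
have -> : sgn_mx w - 1%:M = diag_mx (\row_i ((-1) ^+ w i - 1)).
  by apply/matrixP => i j; rewrite !mxE; case: eqP; rewrite ?subr0.
rewrite mxrank_diag; apply: eq_card => i; rewrite !inE mxE subr_eq0.
by have /= := inj_eq signr_inj (w i) false; rewrite expr0 => ->; case: (w i).
Qed.

(* Eigenvalue multiplicities are compared through the rank of [S - 1]: traces
   would only give them modulo the characteristic. *)
Lemma weight_conj_e_half (Y : 'M[K]_n) (w : word) c :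
    (0 < n)%N -> ~~ odd n -> Y \in unitmx ->
  Y *m sgn_mx w = c *: (e_half K n *m Y) -> (weight w).*2 = n.
Proof.
move=> n_gt0 n_even Y_unit Yw.
have YwY : Y *m sgn_mx w *m invmx Y = c *: e_half K n by rewrite Yw -scalemxAl mulmxK.
have [b cb] : exists b : bool, c = (-1) ^+ b.
  have := conj_scale_sign n_gt0 Y_unit (oner_neq0 K) (sgn_mxK w) _ YwY.
  rewrite e_half_sgn sgn_mxK => /(_ erefl) [->|->].
    by exists false; rewrite expr0.
  by exists true; rewrite expr1.
have := mxrank_conj (sgn_mx w - 1%:M) Y_unit.
rewrite mulmxBr mulmxBl YwY mulmx1 (mulmxV Y_unit) cb e_half_sgn scale_signr_sgn_mx.
rewrite !mxrank_sgn_mx_sub1 weight_xorb weight_lt => [<-|]; have := odd_double_half n;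
  rewrite (negbTE n_even) add0n; case: b {cb}; lia.
Qed.

End SignMatrices.

Section Zariski.
Variables (K : fieldType) (n : nat).

Definition intertwining_poly (L R : 'M[K]_n) (r c : 'I_n) : {mpoly K[n * n]} :=
  \sum_k ('X_(mxvec_index r k) * (L k c)%:MP - (R r k)%:MP * 'X_(mxvec_index k c)).

Lemma intertwining_polyE (L R A : 'M[K]_n) r c :
  (intertwining_poly L R r c).@[fun i => mxvec A 0 i] = (A *m L - R *m A) r c.
Proof.
rewrite /intertwining_poly raddf_sum !mxE -sumrB; apply: eq_bigr => k _.
by rewrite raddfB /= !mevalM !mevalXU !mevalC !mxvecE.
Qed.

Lemma zariski_closed_intertwining (L R : 'M[K]_n) :
  zariski_closed_GL (fun X => X *m L = R *m X).
Proof.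
exists (fun p => exists r c, p = intertwining_poly L R r c) => A _; split.
  by move=> AL p [r [c ->]]; rewrite intertwining_polyE AL subrr mxE.
move=> AL; apply/eqP; rewrite -subr_eq0; apply/eqP/matrixP => r c.
by rewrite -intertwining_polyE mxE; apply: AL; exists r, c.
Qed.

Lemma not_zariski_connected_anticommute (C : 'M[K]_n -> Prop) (A h : 'M[K]_n) :
    (0 < n)%N -> (2%:R : K) != 0 -> A \in unitmx ->
    (forall X, C X -> X \in unitmx) -> C 1%:M ->
    (forall X, C X -> X *m A = A *m X \/ X *m A = - (A *m X)) ->
    C h -> h *m A = - (A *m h) ->
  ~ zariski_connected_GL C.
Proof.
move=> n_gt0 two_nz A_unit C_unit C1 C_sign Ch hA; apply.
exists (fun X => X *m A = A *m X), (fun X => X *m A = (- A) *m X); split.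
- by split; apply: zariski_closed_intertwining.
- by move=> X /C_sign; rewrite mulNmx.
- by exists 1%:M; rewrite mul1mx mulmx1.
- by exists h; rewrite mulNmx.
move=> X CX XA_comm XA_anti.
have : (A *m X) *+ 2 == 0.
  by rewrite mulr2n -{1}XA_comm XA_anti mulNmx addNr.
rewrite -scaler_nat scaler_eq0 (negbTE two_nz) /= => /eqP AX0.
have /mxrank_unit : A *m X \in unitmx by rewrite unitmx_mul A_unit C_unit.
by rewrite AX0 mxrank0 => n0; rewrite -n0 in n_gt0.
Qed.

End Zariski.

Section ProjectiveEquality.
Variables (K : fieldType) (n : nat).
Implicit Types A B C g : 'M[K]_n.

Lemma proj_eq_sym A B : proj_eq A B -> proj_eq B A.
Proof. by case=> c c_nz ->; exists c^-1; rewrite ?invr_eq0 // scalerA mulVf // scale1r. Qed.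

Lemma proj_eq_trans A B C : proj_eq A B -> proj_eq B C -> proj_eq A C.
Proof. by case=> a a_nz -> [b b_nz ->]; exists (a * b); rewrite ?mulf_neq0 // scalerA. Qed.

Lemma proj_eq_conj g A B : proj_eq A B -> proj_eq (g *m A *m invmx g) (g *m B *m invmx g).
Proof. by case=> c c_nz ->; exists c; rewrite // -scalemxAr -scalemxAl. Qed.

Lemma proj_eq_sqr1_conj g A B : g \in unitmx ->
  proj_eq A (g *m B *m invmx g) -> proj_eq (A *m A) 1%:M -> proj_eq (B *m B) 1%:M.
Proof.
move=> g_unit [c c_nz ->] [e e_nz].
rewrite -scalemxAl -scalemxAr scalerA !mulmxA (mulmxKV g_unit) -expr2 => AA.
exists (c ^- 2 * e); first by rewrite mulf_neq0 ?invr_eq0 ?expf_neq0.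
have gBBg : g *m B *m B *m invmx g = (c ^- 2 * e) *: 1%:M.
  by rewrite -scalerA -AA scalerA mulVf ?expf_neq0 // scale1r.
have -> : B *m B = invmx g *m (g *m B *m B *m invmx g) *m g.
  by rewrite !mulmxA (mulVmx g_unit) mul1mx (mulmxKV g_unit).
by rewrite gBBg -scalemxAr -scalemxAl mulmx1 (mulVmx g_unit).
Qed.

Lemma diag_sqr_proj1 (d : 'rV[K]_n) (i0 : 'I_n) :
    proj_eq (diag_mx d *m diag_mx d) 1%:M ->
  exists2 w : {ffun 'I_n -> bool}, w i0 = false & proj_eq (diag_mx d) (sgn_mx K w).
Proof.
case=> a a_nz /matrixP dd.
have d_sqr i : d 0 i ^+ 2 = a by have := dd i i; rewrite mul_diag_mx !mxE eqxx mulr1n mulr1.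
have d0_nz : d 0 i0 != 0 by apply: contra_neq a_nz => d0; rewrite -(d_sqr i0) d0 expr0n.
exists [ffun i => d 0 i != d 0 i0]; first by rewrite ffunE eqxx.
exists (d 0 i0) => //; apply/matrixP => i j; rewrite !mxE ffunE mulrnAr.
congr (_ *+ _); have /eqP := d_sqr i; rewrite -(d_sqr i0) eqf_sqr.
by case: eqVneq => [->|_] /= => [_|/eqP ->]; rewrite ?expr0 ?expr1 ?mulr1 ?mulrN1.
Qed.

End ProjectiveEquality.

Section Torus.
Variables (K : fieldType) (n : nat) (g : 'M[K]_n).
Hypothesis g_unit : g \in unitmx.
Local Notation word := {ffun 'I_n -> bool}.

Definition torus_sgn (w : word) := g *m sgn_mx K w *m invmx g.
Definition torus_perm (s : 'S_n) := g *m perm_mx s *m invmx g.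

Lemma torus_sgn0 : torus_sgn zerow = 1%:M.
Proof. by rewrite /torus_sgn sgn_mx0 mulmx1 (mulmxV g_unit). Qed.

Lemma torus_sgnD (u v : word) : torus_sgn u *m torus_sgn v = torus_sgn (xorw u v).
Proof. by rewrite /torus_sgn -sgn_mxD !mulmxA (mulmxKV g_unit). Qed.

Lemma torus_perm_unit (s : 'S_n) : torus_perm s \in unitmx.
Proof. by rewrite !unitmx_mul g_unit unitmx_perm unitmx_inv g_unit. Qed.

Lemma torus_perm_sgn (s : 'S_n) (w : word) b : (forall i, w (s i) = w i (+) b) ->
  torus_perm s *m torus_sgn w = (-1) ^+ b *: (torus_sgn w *m torus_perm s).
Proof.
move=> ws; rewrite /torus_perm /torus_sgn !mulmxA !(mulmxKV g_unit).
by rewrite -(mulmxA g) (perm_mx_sgn_mx K ws) -scalemxAr -scalemxAl !mulmxA.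
Qed.

Lemma torus_perm_proj_sgn (s : 'S_n) (w : word) b (A : 'M[K]_n) :
    (forall i, w (s i) = w i (+) b) -> proj_eq A (torus_sgn w) ->
  torus_perm s *m A = (-1) ^+ b *: (A *m torus_perm s).
Proof.
move=> ws [c _ ->]; rewrite -scalemxAr (torus_perm_sgn ws) scalerA mulrC -scalerA.
by rewrite scalemxAl.
Qed.

Hypothesis two_nz : (2%:R : K) != 0.

Lemma torus_sgn_proj1 (w : word) i k : proj_eq (torus_sgn w) 1%:M -> w i = w k.
Proof.
case=> c _ wc; apply: (sgn_mx_scalar two_nz (c := c)).
have -> : sgn_mx K w = invmx g *m torus_sgn w *m g.
  by rewrite /torus_sgn !mulmxA (mulVmx g_unit) mul1mx (mulmxKV g_unit).
by rewrite wc -scalemxAr -scalemxAl mulmx1 (mulVmx g_unit) scalemx1.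
Qed.

Lemma weight_torus_sgn_conj (w : word) : (0 < n)%N -> ~~ odd n ->
  pgl_conj (torus_sgn w) (e_half K n) -> (weight w).*2 = n.
Proof.
move=> n_gt0 n_even [X X_unit [c _ Xw]].
apply: (weight_conj_e_half two_nz (Y := X *m g) (c := c)) => //; first by rewrite unitmx_mul X_unit.
by rewrite scalemxAl -Xw /torus_sgn !mulmxA !(mulmxKV X_unit) (mulmxKV g_unit).
Qed.

End Torus.

Section ToralCode.
Variables (K : fieldType) (n : nat) (D : 'M[K]_n -> Prop) (g : 'M[K]_n) (i0 : 'I_n).
Hypotheses (D_sub : pgl_subgroup D) (D_sqr : forall A, D A -> proj_eq (A *m A) 1%:M).
Hypotheses (g_unit : g \in unitmx)
  (D_tor : forall A, D A -> exists d, proj_eq A (g *m diag_mx d *m invmx g)).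

Local Notation word := {ffun 'I_n -> bool}.

(* A word and its complement give the same element of PGL_n; the condition
   [~~ w i0] picks one of them. *)
Definition toral_code : {set word} := [set w : word | ~~ w i0 & `[< D (torus_sgn g w) >]].

Lemma toral_code_sgn (w : word) : w \in toral_code -> D (torus_sgn g w).
Proof. by rewrite inE => /andP[_ /asboolP]. Qed.

Lemma toral_code0 : zerow \in toral_code.
Proof. by case: D_sub => _ D1 _ _ _; rewrite inE ffunE torus_sgn0 //; apply/asboolP. Qed.

Lemma toral_code_xor : {in toral_code &, forall u v, xorw u v \in toral_code}.
Proof.
case: D_sub => _ _ _ DM _ u v; rewrite !inE => /andP[u0 /asboolP Du] /andP[v0 /asboolP Dv].
by rewrite ffunE (negbTE u0) (negbTE v0) -torus_sgnD //; apply/asboolP/DM.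
Qed.

Lemma toral_codeP A : D A -> exists2 w, w \in toral_code & proj_eq A (torus_sgn g w).
Proof.
move=> DA; have [d Ad] := D_tor DA.
have [w w0 dw] := diag_sqr_proj1 i0 (proj_eq_sqr1_conj g_unit Ad (D_sqr DA)).
have Aw : proj_eq A (torus_sgn g w) := proj_eq_trans Ad (proj_eq_conj g dw).
exists w => //; rewrite inE w0; apply/asboolP.
by case: D_sub => _ _ Dproj _ _; apply: Dproj DA (proj_eq_sym Aw).
Qed.

Hypothesis two_nz : (2%:R : K) != 0.

Lemma toral_code_proj1 (w : word) :
  w \in toral_code -> proj_eq (torus_sgn g w) 1%:M -> w = zerow.
Proof.
rewrite inE => /andP[w0 _] w1; apply/ffunP => i.
by rewrite ffunE (torus_sgn_proj1 g_unit two_nz i i0 w1) (negbTE w0).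
Qed.

Lemma centralizer_sign X A : (0 < n)%N -> pgl_centralizer D X -> D A ->
  X *m A = A *m X \/ X *m A = - (A *m X).
Proof.
move=> n_gt0 [X_unit XD] DA; have [c _ XA] := XD A DA; have [e e_nz AA] := D_sqr DA.
rewrite scalemx1 in AA.
have XA' : X *m A = c *: (A *m X) by rewrite -[X *m A](mulmxKV X_unit) XA -scalemxAl.
have [c1|cN1] := conj_scale_sign n_gt0 X_unit e_nz AA AA XA.
  by left; rewrite XA' c1 scale1r.
by right; rewrite XA' cN1 scaleN1r.
Qed.

Lemma torus_perm_centralizer (s : 'S_n) j :
    (forall v i, v \in toral_code -> v (s i) = v i (+) v j) ->
  pgl_centralizer D (torus_perm g s).
Proof.
move=> sV; split=> [|A DA]; first exact: torus_perm_unit.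
have [w wV Aw] := toral_codeP DA.
exists ((-1) ^+ w j); first by rewrite signr_eq0.
rewrite (torus_perm_proj_sgn g_unit (fun i => sV w i wV) Aw) -scalemxAl.
by rewrite mulmxK // torus_perm_unit.
Qed.

Hypothesis n_even : ~~ odd n.

Lemma centralizer_not_connected : pgl_nontrivial D ->
    (forall A, D A -> ~ proj_eq A 1%:M -> pgl_conj A (e_half K n)) ->
  ~ zariski_connected_GL (pgl_centralizer D).
Proof.
move=> [A DA A1] D_conj; have n_gt0 : (0 < n)%N by apply: leq_ltn_trans (ltn_ord i0).
have weightV w : w \in toral_code -> w != zerow -> (weight w).*2 = n.
  move=> wV w_nz; apply: (weight_torus_sgn_conj g_unit two_nz) => //.
  apply: D_conj (toral_code_sgn wV) _.
  by move/(toral_code_proj1 wV)/eqP; apply/negP.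
have [a aV Aa] := toral_codeP DA.
have [j aj] : exists j, a j.
  apply: contrapT => no_j; apply: A1; apply: proj_eq_trans Aa _.
  have -> : a = zerow.
    by apply/ffunP => i; rewrite ffunE; apply/negbTE/negP => ai; apply: no_j; exists i.
  by rewrite torus_sgn0 //; exists 1; rewrite ?oner_eq0 ?scale1r.
have [s sV] := translation_perm toral_code0 toral_code_xor weightV j.
apply: (not_zariski_connected_anticommute n_gt0 two_nz (A := A) (h := torus_perm g s)) => //.
- by case: D_sub => DU _ _ _ _; apply: DU.
- by move=> X [].
- by split=> [|B _]; [exact: unitmx1 | exists 1; rewrite ?oner_eq0 // invmx1 mul1mx mulmx1 scale1r].
- by move=> X CX; apply: centralizer_sign.
- exact: torus_perm_centralizer sV.
by rewrite (torus_perm_proj_sgn g_unit (fun i => sV a i aV) Aa) aj scaleN1r.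
Qed.

End ToralCode.

Theorem theorem4p12 (K : closedFieldType) (n : nat)
  (hchar : (2%:R : K) != 0) (hn : (2 <= n)%N) (hev : ~~ odd n)
  (D : 'M[K]_n -> Prop)
  (hD : pgl_subgroup D) (hab : pgl_elem_abelian2 D)
  (hnt : pgl_nontrivial D) (htor : pgl_toral D)
  (hconn : zariski_connected_GL (pgl_centralizer D)) :
  exists A : 'M[K]_n,
    [/\ D A, ~ proj_eq A 1%:M & ~ pgl_conj A (e_half K n)].
Proof.
have n_gt0 : (0 < n)%N by apply: leq_trans hn.
have [g g_unit D_tor] := htor; have [_ _ D_sqr] := hab.
apply: contrapT => noA.
apply: (centralizer_not_connected (Ordinal n_gt0) hD D_sqr g_unit D_tor hchar hev hnt _ hconn).
by move=> A DA A1; apply: contrapT => A_nconj; apply: noA; exists A.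
Qed.
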